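(* Let $\mathcal{C}$ be an $(s,\kappa)$-disjointness-expressing class of graphs. Then any proof labeling scheme for $\mathcal{C}$ has complexity $\Omega\!\left(\frac{n^{\kappa}}{s}\right)$. In particular, if $s$ is a constant and $\kappa=1$, the complexity is $\Omega(n)$.
   Context: All graphs are finite, simple, undirected, connected; vertices of an $n$-vertex graph have distinct identifiers in $\{1,\dots,\mathrm{poly}(n)\}$. A proof labeling scheme for a class $\mathcal{C}$ is a prover, assigning to each $G\in\mathcal{C}$ a certificate (binary word) to each vertex, together with a local verifier: each vertex $v$ outputs accept/reject depending only on its identifier and the certificates (and identifiers) in its closed neighborhood $N[v]$ (and possibly on the subgraph induced by $N[v]$). If $G\in\mathcal{C}$ all vertices accept the prover's certificates; if $G\notin\mathcal{C}$, for every assignment of certificates some vertex rejects. The complexity of the scheme is the maximum certificate length (bits) assigned to an $n$-vertex graph of $\mathcal{C}$, as a function of $n$. A class $\mathcal{C}$ is $(s,\kappa)$-disjointness-expressing if for some constant $\alpha>0$, for every positive integer $N$ and every $X\subseteq\{1,\dots,N\}$ one can define graphs $L(X)$ and $R(X)$, each containing a labelled set $S$ of special vertices, such that for all $A,B\subseteq\{1,\dots,N\}$: (i) the graph $g(L(A),R(B))$ obtained by identifying each vertex of $S$ in $L(A)$ with the corresponding vertex of $S$ in $R(B)$ is connected and has at most $\alpha N^{1/\kappa}$ vertices; (ii) the subgraph of $g(L(A),R(B))$ induced by the closed neighborhood $N[S]$ is independent of $A,B$ (for all $A,A',B,B'$ there is an isomorphism between these induced subgraphs that is the identity on $S$) and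 has at most $s$ vertices; (iii) $g(L(A),R(B))\in\mathcal{C}$ if and only if $A\cap B=\emptyset$. *)

From mathcomp Require Import all_boot.
From mathcomp Require Import finmap.
From Stdlib Require Import Reals.

Set Implicit Arguments.
Unset Strict Implicit.
Unset Printing Implicit Defensive.

Local Open Scope fset_scope.

Definition simple_graph (V : finType) (e : rel V) : Prop :=
  symmetric e /\ irreflexive e.

Definition connected_graph (V : finType) (e : rel V) : Prop :=
  simple_graph e /\ 0 < #|V| /\ (forall x y : V, connect e x y).

Definition graph_class := forall V : finType, rel V -> Prop.

Definition valid_ids (idb : nat -> nat) (V : finType) (idf : V -> nat) : Prop :=
  injective idf /\ (forall v, 1 <= idf v <= idb #|V|).

Definition cert := seq bool.

(* Local view of a vertex v: its identifier, its certificate, the set of *)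
(* (identifier, certificate) pairs of its neighbours, and the subgraph    *)
(* induced by N[v], given as the set of ordered pairs of identifiers of   *)
(* adjacent vertices of N[v] (identifiers are distinct, so this is the    *)
(* induced subgraph labelled by identifiers).                             *)
Definition view := (nat * cert * {fset (nat * cert)} * {fset (nat * nat)})%type.

Definition closed_nbhd (V : finType) (e : rel V) (v : V) : pred V :=
  fun u => (u == v) || e v u.

Definition local_view (V : finType) (e : rel V) (idf : V -> nat)
    (c : V -> cert) (v : V) : view :=
  (idf v, c v,
   [fset (idf u, c u) | u : V & e v u],
   [fset (idf x, idf y) | x : V, y : V &
      [&& closed_nbhd e v x, closed_nbhd e v y & e x y]]).

Definition verifier := view -> bool.

Definition proof_labeling_scheme (idb : nat -> nat) (C : graph_class)
    (f : nat -> nat) (D : verifier) : Prop :=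
  (forall (V : finType) (e : rel V) (idf : V -> nat),
      connected_graph e -> valid_ids idb idf -> C V e ->
      exists c : V -> cert,
        (forall v, size (c v) <= f #|V|) /\
        (forall v, D (local_view e idf c v)))
  /\
  (forall (V : finType) (e : rel V) (idf : V -> nat),
      connected_graph e -> valid_ids idb idf -> ~ C V e ->
      forall c : V -> cert, exists v, D (local_view e idf c v) = false).

(* L has vertices VL, edges eL, special vertices sL : 'I_k -> VL;       *)
(* R similarly.  The glued graph has vertices VL + (VR minus special),  *)
(* special vertex i of R being identified with special vertex i of L.   *)
Section Glue.
Variables (k : nat) (VL VR : finType) (eL : rel VL) (eR : rel VR)
  (sL : 'I_k -> VL) (sR : 'I_k -> VR).

Definition glue_vertex : finType := (VL + {r : VR | r \notin codom sR})%type.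

Definition glue_corrR (r : VR) (x : glue_vertex) : bool :=
  match x with
  | inl l => [exists i, (sR i == r) && (sL i == l)]
  | inr r' => val r' == r
  end.

Definition glue_edge : rel glue_vertex :=
  fun x y =>
    [exists a : VL, exists b : VL, [&& x == inl a, y == inl b & eL a b]]
    || [exists a : VR, exists b : VR, [&& glue_corrR a x, glue_corrR b y & eR a b]].

Definition glue_special (i : 'I_k) : glue_vertex := inl (sL i).


Definition glue_NS : {set glue_vertex} :=
  [set x | [exists i, (x == glue_special i) || glue_edge (glue_special i) x]].
End Glue.
Arguments glue_vertex {k} VL {VR} sR.
Arguments glue_corrR {k VL VR} sL sR r x.
Arguments glue_edge {k VL VR} eL eR sL sR x y.
Arguments glue_special {k VL VR} sL sR i.
Arguments glue_NS {k VL VR} eL eR sL sR.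

(* Subsets of {1,...,N} are represented by {set 'I_N}.                   *)
Definition disjointness_expressing (s : nat) (kappa : R) (C : graph_class) : Prop :=
  exists alpha : R, (0 < alpha)%R /\
  forall N : nat, 0 < N ->
  exists (k : nat)
         (VL VR : {set 'I_N} -> finType)
         (eL : forall X, rel (VL X)) (eR : forall X, rel (VR X))
         (sL : forall X, 'I_k -> VL X) (sR : forall X, 'I_k -> VR X),
    (forall X, simple_graph (eL X) /\ simple_graph (eR X)
               /\ injective (sL X) /\ injective (sR X)) /\
    (forall A B : {set 'I_N},
        connected_graph (glue_edge (eL A) (eR B) (sL A) (sR B)) /\
        (INR #|glue_vertex (VL A) (sR B)| <= alpha * Rpower (INR N) (/ kappa))%R) /\
    (* (ii) the subgraph induced by N[S] does not depend on A, B, and has *)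
    (*      at most s vertices *)
    (forall A B A' B' : {set 'I_N},
        exists phi : glue_vertex (VL A) (sR B) -> glue_vertex (VL A') (sR B'),
          {in glue_NS (eL A) (eR B) (sL A) (sR B) &, injective phi} /\
          phi @: glue_NS (eL A) (eR B) (sL A) (sR B)
            = glue_NS (eL A') (eR B') (sL A') (sR B') /\
          (forall i, phi (glue_special (sL A) (sR B) i)
                     = glue_special (sL A') (sR B') i) /\
          {in glue_NS (eL A) (eR B) (sL A) (sR B) &, forall x y,
             glue_edge (eL A') (eR B') (sL A') (sR B') (phi x) (phi y)
             = glue_edge (eL A) (eR B) (sL A) (sR B) x y}) /\
    (forall A B : {set 'I_N},
        #|glue_NS (eL A) (eR B) (sL A) (sR B)| <= s) /\
    (forall A B : {set 'I_N},
        C _ (glue_edge (eL A) (eR B) (sL A) (sR B)) <-> A :&: B = set0).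

From mathcomp Require Import all_boot finmap zify.
From Stdlib Require Import Reals Lra Classical IndefiniteDescription.
Import ssrnat.

(* A fooling-set argument.  For A ⊆ {1..N} the glued graph G(A, Ā) is in the
   class; fix accepting certificates of length ≤ f(n) for it, with identifiers
   numbering L(A) first and R(Ā) after.  Only vertices of N[S] see across the
   cut, so record |L(A)| together with the side, identifier and certificate of
   every vertex of N[S], whose shape does not depend on A.  If A and A' give
   the same record, then in G(A, Ā') each vertex of L(A) has its view from
   G(A, Ā) and each vertex of R(Ā') its view from G(A', Ā'), so all of them
   accept and A ∩ Ā' = ∅.  Records are therefore injective in A, and counting
   them gives N ≤ (s + 1) log n + s (f(n) + 2) for n ≤ α N^(1/κ).  If
   f(n) < n^κ / (16 α^κ s) from some point on, then s f(n) ≤ N/16 + O(1)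
   there, which is absurd for N a large power of 2. *)

Set Implicit Arguments.
Unset Strict Implicit.
Unset Printing Implicit Defensive.

Lemma local_view_transfer (V1 V2 : finType) (e1 : rel V1) (e2 : rel V2)
    (id1 : V1 -> nat) (id2 : V2 -> nat) (c1 : V1 -> cert) (c2 : V2 -> cert)
    (v1 : V1) (v2 : V2) (h : V1 -> V2) :
  h v1 = v2 ->
  (forall x, closed_nbhd e1 v1 x -> id2 (h x) = id1 x /\ c2 (h x) = c1 x) ->
  {in closed_nbhd e1 v1 &, forall x y, e2 (h x) (h y) = e1 x y} ->
  (forall y, closed_nbhd e2 v2 y -> exists2 x, closed_nbhd e1 v1 x & h x = y) ->
  local_view e1 id1 c1 v1 = local_view e2 id2 c2 v2.
Proof.
move=> hv hdata hedge hsurj.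
have N1v1 : closed_nbhd e1 v1 v1 by rewrite /closed_nbhd eqxx.
have hN x : closed_nbhd e1 v1 x -> closed_nbhd e2 v2 (h x).
  move=> N1x; rewrite /closed_nbhd -hv hedge //.
  by case/orP: N1x => [/eqP ->|->]; rewrite ?eqxx ?orbT.
have hnbr x : closed_nbhd e1 v1 x -> e2 v2 (h x) = e1 v1 x.
  by move=> N1x; rewrite -hv hedge.
rewrite /local_view -hv; have [-> ->] := hdata v1 N1v1; rewrite hv.
congr (_, _, _, _); apply/fsetP => z.
- apply/imfsetP/imfsetP => -[x /=]; rewrite !inE /= => exy ->.
    have N1x : closed_nbhd e1 v1 x by rewrite /closed_nbhd exy orbT.
    exists (h x); first by rewrite !inE /= hnbr.
    by have [-> ->] := hdata x N1x.
  have N2x : closed_nbhd e2 v2 x by rewrite /closed_nbhd exy orbT.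
  have [x' N1x' hx] := hsurj x N2x.
  exists x'; first by rewrite !inE /= -hnbr // hx.
  by rewrite -hx; have [-> ->] := hdata x' N1x'.
- apply/imfset2P/imfset2P => -[x /= _ [y /=]]; rewrite !inE /= => /and3P [Nx Ny exy] ->.
    exists (h x) => //; exists (h y); first by rewrite !inE /= !hN // hedge.
    by have [-> _] := hdata x Nx; have [-> _] := hdata y Ny.
  have [x' Nx' hx] := hsurj x Nx; have [y' Ny' hy] := hsurj y Ny.
  exists x' => //; exists y'; first by rewrite !inE /= Nx' Ny' -hedge // hx hy.
  by rewrite -hx -hy; have [-> _] := hdata x' Nx'; have [-> _] := hdata y' Ny'.
Qed.

Section GlueEdge.
Variables (k : nat) (VL VR : finType) (eL : rel VL) (eR : rel VR)
  (sL : 'I_k -> VL) (sR : 'I_k -> VR).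
Local Notation GV := (glue_vertex VL sR).
Local Notation E := (glue_edge eL eR sL sR).

Lemma glue_edge_inl_inl a b : E (inl a) (inl b) =
  eL a b || [exists i, exists j, [&& sL i == a, sL j == b & eR (sR i) (sR j)]].
Proof.
rewrite /glue_edge; congr orb.
  apply/existsP/idP => [[a' /existsP [b' /and3P [/eqP [->] /eqP [->] ->]]] //|ab].
  by exists a; apply/existsP; exists b; rewrite !eqxx ab.
apply/existsP/existsP => [[a' /existsP [b' /and3P [/existsP [i /andP [/eqP ei /eqP ai]]
   /existsP [j /andP [/eqP ej /eqP bj]] e]]]|[i /existsP [j /and3P [ai bj e]]]].
  by exists i; apply/existsP; exists j; rewrite ai bj ei ej !eqxx e.
exists (sR i); apply/existsP; exists (sR j); rewrite e andbT /glue_corrR.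
by apply/andP; split; apply/existsP; [exists i | exists j]; rewrite eqxx.
Qed.

Lemma glue_edge_inl_inr a r : E (inl a) (inr r) = [exists i, (sL i == a) && eR (sR i) (val r)].
Proof.
rewrite /glue_edge; have -> /= : [exists a0, exists b,
    [&& inl a == inl a0 :> GV, inr r == inl b :> GV & eL a0 b]] = false.
  by apply/negbTE/existsP => -[a0 /existsP [b /and3P [_ /eqP]]].
apply/existsP/existsP => [[a' /existsP [b' /and3P
    [/existsP [i /andP [/eqP ei /eqP ai]] /eqP rb e]]]|[i /andP [ai e]]].
  by exists i; rewrite ai ei rb e eqxx.
exists (sR i); apply/existsP; exists (val r); rewrite e eqxx !andbT.
by apply/existsP; exists i; rewrite eqxx ai.
Qed.

Lemma glue_edge_inr_inl a r : E (inr r) (inl a) = [exists i, (sL i == a) && eR (val r) (sR i)].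
Proof.
rewrite /glue_edge; have -> /= : [exists a0, exists b,
    [&& inr r == inl a0 :> GV, inl a == inl b :> GV & eL a0 b]] = false.
  by apply/negbTE/existsP => -[a0 /existsP [b /and3P [/eqP]]].
apply/existsP/existsP => [[a' /existsP [b' /and3P
    [/eqP rb /existsP [i /andP [/eqP ei /eqP ai]] e]]]|[i /andP [ai e]]].
  by exists i; rewrite ai ei rb e eqxx.
exists (val r); apply/existsP; exists (sR i); rewrite e eqxx andbT /=.
by apply/existsP; exists i; rewrite eqxx ai.
Qed.

Lemma glue_edge_inr_inr r r' : E (inr r) (inr r') = eR (val r) (val r').
Proof.
rewrite /glue_edge; have -> /= : [exists a0, exists b,
    [&& inr r == inl a0 :> GV, inr r' == inl b :> GV & eL a0 b]] = false.
  by apply/negbTE/existsP => -[a0 /existsP [b /and3P [/eqP]]].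
apply/existsP/idP => [[a' /existsP [b' /and3P [/eqP <- /eqP <- e]]] //|e].
by exists (val r); apply/existsP; exists (val r'); rewrite !eqxx e.
Qed.

Lemma glue_edge_sym : symmetric eL -> symmetric eR -> symmetric E.
Proof.
move=> symL symR [a|r] [b|r'].
- rewrite !glue_edge_inl_inl symL; congr orb.
  by apply/existsP/existsP => -[i /existsP [j /and3P [ai bj e]]];
    exists j; apply/existsP; exists i; rewrite ai bj symR e.
- by rewrite glue_edge_inl_inr glue_edge_inr_inl; apply: eq_existsb => i; rewrite symR.
- by rewrite glue_edge_inl_inr glue_edge_inr_inl; apply: eq_existsb => i; rewrite symR.
- by rewrite !glue_edge_inr_inr symR.
Qed.

Hypothesis injL : injective sL.

Lemma glue_edge_special_inr i r : E (glue_special sL sR i) (inr r) = eR (sR i) (val r).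
Proof.
rewrite glue_edge_inl_inr; apply/existsP/idP => [[j /andP [/eqP /injL -> //]]|e].
by exists i; rewrite eqxx e.
Qed.

Lemma glue_edge_inl_inr_special a r :
  E (inl a) (inr r) = [exists i, (sL i == a) && E (glue_special sL sR i) (inr r)].
Proof.
by rewrite glue_edge_inl_inr; apply: eq_existsb => i; rewrite glue_edge_special_inr.
Qed.

Lemma glue_special_in_NS i : glue_special sL sR i \in glue_NS eL eR sL sR.
Proof. by rewrite inE; apply/existsP; exists i; rewrite eqxx. Qed.

Lemma glue_nbr_special_in_NS i y : E (glue_special sL sR i) y -> y \in glue_NS eL eR sL sR.
Proof. by move=> e; rewrite inE; apply/existsP; exists i; rewrite e orbT. Qed.

End GlueEdge.

Definition sum_rank_id (T1 T2 : finType) (x : T1 + T2) : nat :=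
  match x with inl a => (enum_rank a).+1 | inr b => #|T1| + (enum_rank b).+1 end.

Lemma sum_rank_id_le (T1 T2 : finType) (x : T1 + T2) : sum_rank_id x <= #|{: T1 + T2}|.
Proof.
rewrite card_sum; case: x => [a|b] /=; last by rewrite leq_add2l.
exact: leq_trans (ltn_ord (enum_rank a)) (leq_addr _ _).
Qed.

Lemma sum_rank_id_valid (idb : nat -> nat) (T1 T2 : finType) :
  (forall n, n <= idb n) -> valid_ids idb (@sum_rank_id T1 T2).
Proof.
move=> idb_ge; split=> [[a|b] [a'|b'] /=|x].
- by move=> [] /val_inj /enum_rank_inj ->.
- move=> eq_id; have := ltn_ord (enum_rank a); move: eq_id; rewrite addnS => -[->].
  by rewrite ltnNge leq_addr.
- move=> eq_id; have := ltn_ord (enum_rank a'); move: eq_id; rewrite addnS => -[<-].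
  by rewrite ltnNge leq_addr.
- by move=> /addnI [] /val_inj /enum_rank_inj ->.
apply/andP; split; first by case: x => [a|b] /=; rewrite ?addnS.
exact: leq_trans (sum_rank_id_le x) (idb_ge _).
Qed.

Lemma sum_expn2_lt n : \sum_(i < n) 2 ^ i < 2 ^ n.
Proof.
elim: n => [|n IHn]; first by rewrite big_ord0.
by rewrite big_ord_recr /= expnS mul2n -addnn ltn_add2r.
Qed.

Lemma card_crossing_data_le (T : finType) (W w F s : nat) :
  W.+1 = 2 ^ w -> #|T| <= s ->
  #|{: 'I_W.+1 * {ffun T -> bool * 'I_W.+1 * {bseq F of bool}}}|
    <= 2 ^ (w * s.+1 + s * F.+2).
Proof.
move=> W_eq card_T.
rewrite card_prod card_ffun !card_prod card_bool !card_ord card_bseq card_bool W_eq.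
have expn_mono e m n : m <= n -> m ^ e <= n ^ e.
  by move=> le_mn; elim: e => // e IHe; rewrite !expnS leq_mul.
have data_le : 2 * 2 ^ w * \sum_(i < F.+1) 2 ^ i <= 2 ^ (w + F.+2).
  by rewrite -expnS -addSnnS expnD leq_mul2l ltnW ?sum_expn2_lt ?orbT.
have -> : w * s.+1 + s * F.+2 = w + (w + F.+2) * s by lia.
rewrite expnD leq_mul2l expnM (leq_trans (expn_mono _ _ _ data_le)) ?orbT //.
by rewrite -!expnM leq_exp2l // leq_mul2l card_T orbT.
Qed.

Definition is_inr (T1 T2 : Type) (x : T1 + T2) : bool := if x is inr _ then true else false.

Section Fooling.
(* Keeps the set argument of the families eL, eR, sL, sR explicit. *)
Local Unset Implicit Arguments.
Variables (C : graph_class) (idb : nat -> nat) (f : nat -> nat) (D : verifier).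
Hypothesis idb_ge : forall n, n <= idb n.
Hypothesis pls : proof_labeling_scheme idb C f D.
Variables (N k : nat) (VL VR : {set 'I_N} -> finType)
  (eL : forall X, rel (VL X)) (eR : forall X, rel (VR X))
  (sL : forall X, 'I_k -> VL X) (sR : forall X, 'I_k -> VR X).

Local Notation GV A B := (glue_vertex (VL A) (sR B)).
Local Notation GE A B := (glue_edge (eL A) (eR B) (sL A) (sR B)).
Local Notation NS A B := (glue_NS (eL A) (eR B) (sL A) (sR B)).
Local Notation sp A B i := (glue_special (sL A) (sR B) i).

Hypothesis symL : forall X : {set 'I_N}, symmetric (eL X).
Hypothesis symR : forall X : {set 'I_N}, symmetric (eR X).
Hypothesis injL : forall X : {set 'I_N}, injective (sL X).
Hypothesis connG : forall A B : {set 'I_N}, connected_graph (GE A B).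
Hypothesis isoNS : forall A B A' B' : {set 'I_N},
  exists phi : GV A B -> GV A' B',
    {in NS A B &, injective phi} /\ phi @: NS A B = NS A' B' /\
    (forall i, phi (sp A B i) = sp A' B' i) /\
    {in NS A B &, forall x y, GE A' B' (phi x) (phi y) = GE A B x y}.
Hypothesis classG : forall A B : {set 'I_N}, C _ (GE A B) <-> A :&: B = set0.

Local Notation gid A B := (@sum_rank_id (VL A) {r : VR B | r \notin codom (sR B)}).

Lemma glued_sym A B : symmetric (GE A B).
Proof. exact: glue_edge_sym. Qed.

Lemma special_edge_invariant A B A' B' i j :
  GE A B (sp A B i) (sp A B j) = GE A' B' (sp A' B' i) (sp A' B' j).
Proof.
have [phi [_ [_ [phi_sp phi_edge]]]] := isoNS A B A' B'.
by rewrite -!phi_sp phi_edge // glue_special_in_NS.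
Qed.

Lemma left_edge_invariant A B B' a b : GE A B (inl a) (inl b) = GE A B' (inl a) (inl b).
Proof.
case: (pickP (fun i => sL A i == a)) => [i /eqP ai|no_a];
  last by rewrite !glue_edge_inl_inl; congr orb;
    apply/idP/idP => /existsP [i /existsP [j /and3P [ai _ _]]]; have := no_a i; rewrite ai.
case: (pickP (fun j => sL A j == b)) => [j /eqP bj|no_b].
  by have := special_edge_invariant A B A B' i j; rewrite /glue_special ai bj.
by rewrite !glue_edge_inl_inl; congr orb;
  apply/idP/idP => /existsP [i' /existsP [j /and3P [_ bj _]]]; have := no_b j; rewrite bj.
Qed.

Lemma special_right_edge_invariant A A' B i r :
  GE A B (sp A B i) (inr r) = GE A' B (sp A' B i) (inr r).
Proof. by rewrite !glue_edge_special_inr. Qed.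

Lemma right_edge_invariant A A' B r r' : GE A B (inr r) (inr r') = GE A' B (inr r) (inr r').
Proof. by rewrite !glue_edge_inr_inr. Qed.

Lemma yes_cert_exists A : exists c : GV A (~: A) -> cert,
  (forall v, size (c v) <= f #|GV A (~: A)|) /\
  (forall v, D (local_view (GE A (~: A)) (gid A (~: A)) c v)).
Proof.
apply: pls.1; [exact: connG | exact: sum_rank_id_valid | apply/classG].
by rewrite setICr.
Qed.

Definition yes_cert A : GV A (~: A) -> cert :=
  proj1_sig (constructive_indefinite_description _ (yes_cert_exists A)).

Lemma yes_cert_spec A :
  (forall v, size (yes_cert A v) <= f #|GV A (~: A)|) /\
  (forall v, D (local_view (GE A (~: A)) (gid A (~: A)) (yes_cert A) v)).
Proof. exact: proj2_sig (constructive_indefinite_description _ (yes_cert_exists A)). Qed.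

Definition ref_iso A : GV set0 set0 -> GV A (~: A) :=
  proj1_sig (constructive_indefinite_description _ (isoNS set0 set0 A (~: A))).

(* N[S] of every G(A, Ā) is identified with its copy in G(∅, ∅). *)
Definition ref_NS := {x : GV set0 set0 | x \in NS set0 set0}.

Local Notation iso A b := (ref_iso A (val b)).

Lemma ref_iso_spec A :
  {in NS set0 set0 &, injective (ref_iso A)} /\
  ref_iso A @: NS set0 set0 = NS A (~: A) /\
  (forall i, ref_iso A (sp set0 set0 i) = sp A (~: A) i) /\
  {in NS set0 set0 &, forall x y,
     GE A (~: A) (ref_iso A x) (ref_iso A y) = GE set0 set0 x y}.
Proof. exact: proj2_sig (constructive_indefinite_description _ (isoNS set0 set0 A (~: A))). Qed.

Lemma ref_iso_in_NS A (b : ref_NS) : iso A b \in NS A (~: A).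
Proof. by have [_ [<- _]] := ref_iso_spec A; apply: imset_f; exact: valP b. Qed.

Lemma ref_iso_onto A y : y \in NS A (~: A) -> exists b : ref_NS, iso A b = y.
Proof.
have [_ [<- _]] := ref_iso_spec A; case/imsetP => x NSx ->.
by exists (exist _ x NSx).
Qed.

Lemma ref_iso_inj A : injective (fun b : ref_NS => iso A b).
Proof.
have [iso_inj _] := ref_iso_spec A.
by move=> b b' /iso_inj eq_b; apply/val_inj/eq_b; exact: valP.
Qed.

Definition ref_special i : ref_NS := exist _ (sp set0 set0 i) (glue_special_in_NS _ _ _ _ i).

Lemma ref_iso_special A i : iso A (ref_special i) = sp A (~: A) i.
Proof. by have [_ [_ [-> _]]] := ref_iso_spec A. Qed.

Lemma ref_iso_edge A A' (b1 b2 : ref_NS) :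
  GE A (~: A) (iso A b1) (iso A b2) = GE A' (~: A') (iso A' b1) (iso A' b2).
Proof.
have [_ [_ [_ edgeA]]] := ref_iso_spec A; have [_ [_ [_ edgeA']]] := ref_iso_spec A'.
by rewrite edgeA ?edgeA' //; exact: valP.
Qed.

Definition crossing_agree A A' :=
  #|VL A| = #|VL A'| /\
  forall b : ref_NS,
    [/\ is_inr (iso A b) = is_inr (iso A' b),
        gid A (~: A) (iso A b) = gid A' (~: A') (iso A' b) &
        yes_cert A (iso A b) = yes_cert A' (iso A' b)].

Section Crossing.
Variables A A' : {set 'I_N}.
Hypothesis agree : crossing_agree A A'.

Definition crossed_cert (x : GV A (~: A')) : cert :=
  match x with inl l => yes_cert A (inl l) | inr r => yes_cert A' (inr r) end.

(* The fallback values of [left_transfer l] and [right_transfer r] are only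
   taken outside the closed neighbourhood of [inl l], resp. [inr r]. *)
Definition left_transfer (l : VL A) (x : GV A (~: A')) : GV A (~: A) :=
  match x with
  | inl a => inl a
  | inr r => if [pick b : ref_NS | iso A' b == inr r] is Some b then iso A b else inl l
  end.

Lemma left_transfer_inr l {r} : (inr r : GV A' (~: A')) \in NS A' (~: A') ->
  exists b : ref_NS, [/\ iso A' b = inr r, left_transfer l (inr r) = iso A b &
                        is_inr (iso A b)].
Proof.
move=> /ref_iso_onto [b0 iso_b0]; rewrite /left_transfer.
case: pickP => [b /eqP iso_b|none]; last by have := none b0; rewrite iso_b0 eqxx.
by exists b; have [-> _ _] := agree.2 b; rewrite iso_b.
Qed.

Lemma left_nbr_in_NS l r :
  GE A (~: A') (inl l) (inr r) -> (inr r : GV A' (~: A')) \in NS A' (~: A').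
Proof.
rewrite glue_edge_inl_inr_special // => /existsP [i /andP [_ e]].
by apply: (glue_nbr_special_in_NS (i := i)); rewrite -(special_right_edge_invariant A).
Qed.

Lemma left_transfer_edge l {a r} : (inr r : GV A' (~: A')) \in NS A' (~: A') ->
  GE A (~: A) (inl a) (left_transfer l (inr r)) = GE A (~: A') (inl a) (inr r).
Proof.
move=> /(left_transfer_inr l) [b [iso_b -> ]].
case iso_Ab : (iso A b) => [//|r0] _; rewrite !glue_edge_inl_inr_special //.
apply: eq_existsb => i; congr andb.
rewrite [RHS](special_right_edge_invariant A A') -iso_Ab -iso_b.
by rewrite -(ref_iso_special A) -(ref_iso_special A') (ref_iso_edge A A').
Qed.

Lemma left_view l : local_view (GE A (~: A')) (gid A (~: A')) crossed_cert (inl l)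
                  = local_view (GE A (~: A)) (gid A (~: A)) (yes_cert A) (inl l).
Proof.
have nbr_cases x : closed_nbhd (GE A (~: A')) (inl l) x ->
    (exists a, x = inl a) \/
    (exists2 r, x = inr r & (inr r : GV A' (~: A')) \in NS A' (~: A')).
  case: x => [a|r]; first by left; exists a.
  by rewrite /closed_nbhd /= => /left_nbr_in_NS NSr; right; exists r.
apply: (local_view_transfer (h := left_transfer l)) => //.
- move=> [a|r] // /nbr_cases [[? //]|[r' [<-] NSr]].
  have [b [iso_b -> _]] := left_transfer_inr l NSr; have [_ -> ->] := agree.2 b.
  by rewrite iso_b /= agree.1.
- move=> x y /nbr_cases [[a ->]|[r -> NSr]] /nbr_cases [[a' ->]|[r' -> NSr']].
  + exact: left_edge_invariant.
  + exact: left_transfer_edge.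
  + by rewrite glued_sym [in RHS]glued_sym /= left_transfer_edge.
  + have [b [iso_b -> _]] := left_transfer_inr l NSr.
    have [b' [iso_b' -> _]] := left_transfer_inr l NSr'.
    by rewrite (ref_iso_edge A A') iso_b iso_b' (right_edge_invariant A' A).
- move=> [a|r0].
    rewrite /closed_nbhd /= => N_a; exists (inl a) => //.
    by rewrite /closed_nbhd /= (left_edge_invariant A (~: A') (~: A)).
  rewrite /closed_nbhd /= => e_lr0.
  have [b iso_b] : exists b : ref_NS, iso A b = inr r0.
    apply: ref_iso_onto; move: e_lr0; rewrite glue_edge_inl_inr_special //.
    by case/existsP => i /andP [_]; apply: glue_nbr_special_in_NS.
  have [is_inr_b _ _] := agree.2 b; move: is_inr_b; rewrite iso_b.
  case iso'_b : (iso A' b) => [//|r] _.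
  have NSr : (inr r : GV A' (~: A')) \in NS A' (~: A') by rewrite -iso'_b ref_iso_in_NS.
  have [b' [iso'_b' transfer_r _]] := left_transfer_inr l NSr.
  have eq_b : b' = b by apply: (ref_iso_inj A'); rewrite /= iso'_b' iso'_b.
  exists (inr r); last by rewrite transfer_r eq_b iso_b.
  by rewrite /closed_nbhd /= -(left_transfer_edge l NSr) transfer_r eq_b iso_b.
Qed.

Definition right_transfer (r : {r : VR (~: A') | r \notin codom (sR (~: A'))})
    (x : GV A (~: A')) : GV A' (~: A') :=
  match x with
  | inl a => if [pick i | sL A i == a] is Some i then inl (sL A' i) else inr r
  | inr r' => inr r'
  end.

Lemma right_transfer_special r i : right_transfer r (inl (sL A i)) = inl (sL A' i).
Proof.
rewrite /right_transfer; case: pickP => [j /eqP /injL -> //|none].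
by have := none i; rewrite eqxx.
Qed.

Lemma special_data_agree i :
  gid A (~: A) (sp A (~: A) i) = gid A' (~: A') (sp A' (~: A') i) /\
  yes_cert A (sp A (~: A) i) = yes_cert A' (sp A' (~: A') i).
Proof.
have [_ eq_id eq_cert] := agree.2 (ref_special i).
by rewrite !ref_iso_special in eq_id eq_cert.
Qed.

Lemma right_view r : local_view (GE A (~: A')) (gid A (~: A')) crossed_cert (inr r)
                   = local_view (GE A' (~: A')) (gid A' (~: A')) (yes_cert A') (inr r).
Proof.
have nbr_cases x : closed_nbhd (GE A (~: A')) (inr r) x ->
    (exists i, x = sp A (~: A') i) \/ (exists r', x = inr r').
  case: x => [a|r']; last by right; exists r'.
  by rewrite /closed_nbhd /= glue_edge_inr_inl => /existsP [i /andP [/eqP <- _]]; left; exists i.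
apply: (local_view_transfer (h := right_transfer r)) => //.
- move=> x /nbr_cases [[i ->]|[r' ->]]; last by rewrite /= agree.1.
  rewrite right_transfer_special; have [eq_id eq_cert] := special_data_agree i.
  by split; apply: esym.
- move=> x y /nbr_cases [[i ->]|[r1 ->]] /nbr_cases [[j ->]|[r2 ->]];
    rewrite ?right_transfer_special /=.
  + exact: (special_edge_invariant A' (~: A') A (~: A')).
  + exact: (special_right_edge_invariant A' A).
  + by rewrite glued_sym [in RHS]glued_sym (special_right_edge_invariant A' A).
  + exact: right_edge_invariant.
- move=> [a'|r'].
    rewrite /closed_nbhd /= => e_ra'; have := e_ra'.
    rewrite glue_edge_inr_inl => /existsP [i /andP [/eqP a'_i _]].
    exists (inl (sL A i)); last by rewrite right_transfer_special a'_i.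
    rewrite /closed_nbhd /= glued_sym (special_right_edge_invariant A A' _ i r).
    by rewrite glued_sym /glue_special a'_i.
  rewrite /closed_nbhd /= => N_r'; exists (inr r') => //.
  by rewrite /closed_nbhd /= (right_edge_invariant A A').
Qed.

Lemma crossed_cert_accepted v : D (local_view (GE A (~: A')) (gid A (~: A')) crossed_cert v).
Proof.
by case: v => [l|r]; [rewrite left_view; exact: (yes_cert_spec A).2
                     | rewrite right_view; exact: (yes_cert_spec A').2].
Qed.

End Crossing.

Definition fingerprint (W F : nat) A :
    'I_W.+1 * {ffun ref_NS -> bool * 'I_W.+1 * {bseq F of bool}} :=
  (inord #|VL A|,
   [ffun b => (is_inr (iso A b), inord (gid A (~: A) (iso A b)),
               insub_bseq F (yes_cert A (iso A b)))]).

Lemma crossing_agree_disjoint A A' : crossing_agree A A' -> A :&: ~: A' = set0.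
Proof.
move=> agree; apply/classG; apply: NNPP => notC.
have [v] := pls.2 _ _ _ (connG A (~: A')) (sum_rank_id_valid _ _ idb_ge) notC
  (crossed_cert A A').
by rewrite crossed_cert_accepted.
Qed.

Section Fingerprint.
Variables W F : nat.
Hypothesis size_le : forall A, #|GV A (~: A)| <= W.
Hypothesis cert_le : forall A, f #|GV A (~: A)| <= F.

Lemma fingerprint_agree A A' : fingerprint W F A = fingerprint W F A' -> crossing_agree A A'.
Proof.
have card_lt X : #|VL X| < W.+1.
  by rewrite ltnS (leq_trans _ (size_le X)) // card_sum leq_addr.
have id_lt X x : gid X (~: X) x < W.+1.
  by rewrite ltnS (leq_trans (sum_rank_id_le x)) ?size_le.
have cert_size X x : size (yes_cert X x) <= F.
  exact: leq_trans ((yes_cert_spec X).1 x) (cert_le X).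
case=> /(congr1 (@nat_of_ord _)); rewrite !inordK // => eq_card /ffunP eq_data.
split=> // b; have := eq_data b; rewrite !ffunE.
case=> -> /(congr1 (@nat_of_ord _)) eq_id /(congr1 val).
rewrite !inordK // in eq_id; rewrite /insub_bseq !insubdK //.
all: by rewrite unfold_in /= cert_size.
Qed.

Lemma fingerprint_inj : injective (fingerprint W F).
Proof.
move=> A A' eq_fp; apply/eqP; rewrite eqEsubset; apply/andP; split;
  rewrite subsets_disjoint -setI_eq0; apply/eqP/crossing_agree_disjoint/fingerprint_agree => //.
Qed.

End Fingerprint.

Lemma fooling_bound (w F s : nat) :
  (forall A, #|GV A (~: A)| < 2 ^ w) -> (forall A, f #|GV A (~: A)| <= F) ->
  #|NS set0 set0| <= s -> N <= w * s.+1 + s * F.+2.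
Proof.
move=> size_lt cert_le NS_le; pose W := (2 ^ w).-1.
have W_eq : W.+1 = 2 ^ w by rewrite prednK ?expn_gt0.
have size_le A : #|GV A (~: A)| <= W by rewrite -ltnS W_eq.
rewrite -(@leq_exp2l 2) //; have := leq_card _ (fingerprint_inj _ _ size_le cert_le).
rewrite -cardsT -powersetT card_powerset cardsT card_ord => /leq_trans; apply.
by apply: card_crossing_data_le W_eq _; rewrite card_sig.
Qed.

End Fooling.

Lemma exists_expn2_gt_linear a b : exists t, a + b * t < 2 ^ t.
Proof.
pose m := a + 2 * b + 1; exists (m + m).
have m_lt : m < 2 ^ m := ltn_expl m (isT : 1 < 2).
rewrite expnD; move: (2 ^ m) m_lt => M; rewrite /m; nia.
Qed.

Local Open Scope R_scope.

Lemma Rpower_le_of_le_root (alpha kappa x y : R) :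
  0 < kappa -> 0 < alpha -> 0 < x -> 0 < y ->
  x <= alpha * Rpower y (/ kappa) -> Rpower x kappa <= Rpower alpha kappa * y.
Proof.
move=> kappa_gt0 alpha_gt0 x_gt0 y_gt0 x_le.
apply: Rle_trans (Rle_Rpower_l _ _ _ (Rlt_le _ _ kappa_gt0) (conj x_gt0 x_le)) _.
rewrite -Rpower_mult_distr //; last exact: exp_pos.
by rewrite Rpower_mult Rinv_l ?Rpower_1 //; [right | lra].
Qed.

Lemma INR_expn m n : INR (m ^ n) = INR m ^ n.
Proof. by elim: n => [|n IHn] //; rewrite expnS -multE mult_INR IHn. Qed.

Lemma ltn_expn2_of_le_root (alpha kappa : R) (a p n t : nat) :
  0 < kappa -> alpha < INR a -> / kappa < INR p ->
  INR n <= alpha * Rpower (INR (2 ^ t)) (/ kappa) -> (n < 2 ^ (a + t * p))%N.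
Proof.
move=> kappa_gt0 alpha_lt inv_kappa_lt n_le.
have n_le_nat : (n <= a * (2 ^ t) ^ p)%N.
  apply/leP/INR_le; rewrite -multE mult_INR INR_expn; apply: Rle_trans n_le _.
  have N_ge1 : 1 <= INR (2 ^ t) by apply: (le_INR 1); apply/leP; rewrite expn_gt0.
  apply: Rle_trans (Rmult_le_compat_r _ _ _ (Rlt_le _ _ (exp_pos _)) (Rlt_le _ _ alpha_lt)) _.
  apply: Rmult_le_compat_l; first exact: pos_INR.
  by rewrite -Rpower_pow; [apply: Rle_Rpower; lra | lra].
apply: leq_ltn_trans n_le_nat _.
by rewrite expnD expnM ltn_pmul2r ?expn_gt0 // ltn_expl.
Qed.

Lemma small_complexity_bound (f : nat -> nat) (alpha kappa : R) (s n0 n N : nat) :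
  0 < kappa -> 0 < alpha -> (0 < s)%N -> (0 < n)%N -> (0 < N)%N ->
  (forall m, (n0 <= m)%N ->
     INR (f m) < / (16 * Rpower alpha kappa) * Rpower (INR m) kappa / INR s) ->
  INR n <= alpha * Rpower (INR N) (/ kappa) ->
  (f n <= (N + 16 * s * \max_(i < n0) f i) %/ (16 * s))%N.
Proof.
move=> kappa_gt0 alpha_gt0 s_gt0 n_gt0 N_gt0 f_small n_le.
rewrite leq_divRL ?muln_gt0 // mulnC.
have [lt_n_n0|le_n0_n] := ltnP n n0.
  rewrite (leq_trans _ (leq_addl _ _)) // leq_mul2l.
  by rewrite (@leq_bigmax _ (fun i : 'I_n0 => f i) (Ordinal lt_n_n0)) orbT.
rewrite (leq_trans _ (leq_addr _ _)) // ltnW //; apply/ltP/INR_lt.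
have INR_gt0 m : (0 < m)%N -> 0 < INR m by move=> /ltP; apply: lt_0_INR.
have alpha_pow_gt0 : 0 < Rpower alpha kappa by exact: exp_pos.
have s_pos := INR_gt0 _ s_gt0.
have n_pow := Rpower_le_of_le_root kappa_gt0 alpha_gt0 (INR_gt0 _ n_gt0) (INR_gt0 _ N_gt0) n_le.
have f_lt : INR (f n) < INR N / (16 * INR s).
  apply: Rlt_le_trans (f_small n le_n0_n) _.
  have -> : INR N / (16 * INR s) =
            / (16 * Rpower alpha kappa) * (Rpower alpha kappa * INR N) / INR s.
    by field; lra.
  apply: Rmult_le_compat_r; first exact/Rlt_le/Rinv_0_lt_compat.
  by apply: Rmult_le_compat_l => //; apply/Rlt_le/Rinv_0_lt_compat; lra.
rewrite -!multE !mult_INR (_ : INR 16 = 16); last by rewrite /=; lra.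
have := Rmult_lt_compat_l (16 * INR s) _ _ ltac:(lra) f_lt.
by have -> : 16 * INR s * (INR N / (16 * INR s)) = INR N by field; lra.
Qed.

Local Close Scope R_scope.

Theorem theorem4p1 (idb : nat -> nat) (Hidb : forall n, n <= idb n)
    (C : graph_class) (s : nat) (kappa : R) (Hkappa : (0 < kappa)%R) :
  disjointness_expressing s kappa C ->
  exists c : R, (0 < c)%R /\
    forall (f : nat -> nat) (D : verifier),
      proof_labeling_scheme idb C f D ->
      forall n0 : nat, exists n : nat, n0 <= n /\
        (c * Rpower (INR n) kappa / INR s <= INR (f n))%R.
Proof.
move=> [alpha [alpha_gt0 expressing]].
exists (/ (16 * Rpower alpha kappa))%R; split.
  by apply: Rinv_0_lt_compat; have := exp_pos (kappa * ln alpha); rewrite /Rpower; lra.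
move=> f D pls n0; apply: NNPP => no_witness.
have f_small m : n0 <= m ->
    (INR (f m) < / (16 * Rpower alpha kappa) * Rpower (INR m) kappa / INR s)%R.
  by move=> le_n0m; apply: Rnot_le_lt => le_f; apply: no_witness; exists m.
have s_gt0 : 0 < s.
  case: s f_small {no_witness expressing} => // /(_ n0 (leqnn n0)).
  by rewrite /Rdiv Rinv_0 Rmult_0_r; have := pos_INR (f n0); lra.
have [[a alpha_lt] [p inv_kappa_lt]] := (INR_unbounded alpha, INR_unbounded (/ kappa)).
pose F0 := \max_(i < n0) f i.
have [t t_large] := exists_expn2_gt_linear (16 * (a * s.+1 + s * F0 + 2 * s)) (16 * (p * s.+1)).
have N_gt0 : 0 < 2 ^ t by rewrite expn_gt0.
have [k [VL [VR [eL [eR [sL [sR [simple [glued [iso_NS [NS_le classG]]]]]]]]]]] :=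
  expressing _ N_gt0.
pose F := (2 ^ t + 16 * s * F0) %/ (16 * s).
have size_lt A : #|glue_vertex (VL A) (sR (~: A))| < 2 ^ (a + t * p).
  exact: ltn_expn2_of_le_root Hkappa alpha_lt inv_kappa_lt (glued A (~: A)).2.
have cert_le A : f #|glue_vertex (VL A) (sR (~: A))| <= F.
  have [[_ [n_gt0 _]] n_le] := glued A (~: A).
  exact: small_complexity_bound Hkappa alpha_gt0 s_gt0 n_gt0 N_gt0 f_small n_le.
have := @fooling_bound C idb f D Hidb pls _ k VL VR eL eR sL sR
  (fun X => (simple X).1.1) (fun X => (simple X).2.1.1) (fun X => (simple X).2.2.1)
  (fun A B => (glued A B).1) iso_NS classG _ _ _ size_lt cert_le (NS_le set0 set0).
have := leq_divM (2 ^ t + 16 * s * F0) (16 * s).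
by move: t_large; rewrite -/F; nia.
Qed.
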